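(* The Monroe–Harsanyi–approval (MHA) and Monroe–Rawls–approval (MRA) rules fail the lower quota. Let $\mathcal C=\{c_1,\dots,c_8\}$, $S=7$, and $|\mathcal V|=10$, with - $B(\{c_1,c_2,c_3,c_4\})=6$; - $B(\{c_5\})=B(\{c_6\})=B(\{c_7\})=B(\{c_8\})=1$; - all other values of $B$ equal to $0$. With $\mathcal A=y_1=\{c_1,c_2,c_3,c_4\}$ and $q=\frac{6}{10}\cdot7$, one has $|\mathcal A|\ge\lfloor q\rfloor=4$. Nevertheless, every $\mathcal W\in\mathrm{MHA}(\sigma)$ and every $\mathcal W\in\mathrm{MRA}(\sigma)$ satisfies $|\mathcal W\cap\{c_1,c_2,c_3,c_4\}|=3<4$.
   Context: An approval-based multi-winner election is a tuple $\sigma=\langle \mathcal V,\mathcal C,S,B\rangle$, where $\mathcal V$ is a finite set of agents, $\mathcal C$ is a finite set of candidates, $1\le S\le|\mathcal C|$ is an integer, and $B:2^{\mathcal C}\to\mathbb N$ gives, for each $\mathcal A\subseteq\mathcal C$, the number $B(\mathcal A)$ of agents whose ballot is exactly $\mathcal A$. For $\mathcal W\subseteq\mathcal C$ with $|\mathcal W|=S$, the set $\mathfrak M_{\sigma,\mathcal W}$ of Monroe assignment functions consists of all $M:2^{\mathcal C}\times\mathcal W\to\mathbb N$ such that: - $\sum_{c\in\mathcal W}M(\mathcal A,c)=B(\mathcal A)$ for every $\mathcal A\subseteq\mathcal C$; - $\lfloor|\mathcal V|/S\rfloor\le\sum_{\mathcal A}M(\mathcal A,c)\le\lceil|\mathcal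 V|/S\rceil$ for every $c\in\mathcal W$. The MHA rule is $\mathrm{MHA}(\sigma)=\operatorname{argmin}_{\mathcal W\subseteq\mathcal C,|\mathcal W|=S}\min_{M\in\mathfrak M_{\sigma,\mathcal W}}\sum_{\mathcal A\subseteq\mathcal C}\sum_{c\in\mathcal W,c\notin\mathcal A}M(\mathcal A,c)$. For the MRA rule, let $\mathrm{MRA}_0(\sigma)$ be the set of $S$-subsets $\mathcal W$ for which some $M\in\mathfrak M_{\sigma,\mathcal W}$ has $\sum_{\mathcal A}\sum_{c\in\mathcal W,c\notin\mathcal A}M(\mathcal A,c)=0$. Then $\mathrm{MRA}(\sigma)=\mathrm{MRA}_0(\sigma)$ if this set is non-empty; otherwise $\mathrm{MRA}(\sigma)$ is the set of all $S$-subsets of $\mathcal C$. *)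

From mathcomp Require Import all_boot.
Set Implicit Arguments. Unset Strict Implicit. Unset Printing Implicit Defensive.

(* An approval-based multi-winner election over a finite candidate type C:
   the committee size S and the ballot-count function B : 2^C -> N. *)
Definition num_agents (C : finType) (B : {set C} -> nat) : nat :=
  \sum_(A : {set C}) B A.

Definition ceil_div (n d : nat) : nat := (n + d.-1) %/ d.

(* M is a Monroe assignment function for committee W (only its values on
   pairs (A, c) with c \in W matter). *)
Definition monroe_assignment (C : finType) (S : nat) (B : {set C} -> nat)
    (W : {set C}) (M : {set C} -> C -> nat) : Prop :=
  (forall A : {set C}, \sum_(c in W) M A c = B A) /\
  (forall c, c \in W ->
     num_agents B %/ S <= \sum_(A : {set C}) M A c <= ceil_div (num_agents B) S).

Definition monroe_cost (C : finType) (W : {set C}) (M : {set C} -> C -> nat) : nat :=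
  \sum_(A : {set C}) \sum_(c in W | c \notin A) M A c.

(* W \in MHA(sigma): W is an S-subset whose optimal Monroe cost is minimal
   among all S-subsets (min over an empty set of assignments = +infinity). *)
Definition MHA (C : finType) (S : nat) (B : {set C} -> nat) (W : {set C}) : Prop :=
  #|W| = S /\
  exists M, monroe_assignment S B W M /\
    forall (W' : {set C}) M', #|W'| = S -> monroe_assignment S B W' M' ->
      monroe_cost W M <= monroe_cost W' M'.

Definition MRA0 (C : finType) (S : nat) (B : {set C} -> nat) (W : {set C}) : Prop :=
  #|W| = S /\ exists M, monroe_assignment S B W M /\ monroe_cost W M = 0.

Definition MRA (C : finType) (S : nat) (B : {set C} -> nat) (W : {set C}) : Prop :=
  MRA0 S B W \/ ((~ exists W0, MRA0 S B W0) /\ #|W| = S).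

(* The concrete election: candidates c_1..c_8 are the ordinals 0..7 of 'I_8. *)
Definition cand (i : nat) : 'I_8 := inord i.
Definition y1 : {set 'I_8} := [set cand 0; cand 1; cand 2; cand 3].
Definition ex_B (A : {set 'I_8}) : nat :=
  if A == y1 then 6
  else if (A == [set cand 4]) || (A == [set cand 5])
          || (A == [set cand 6]) || (A == [set cand 7]) then 1
  else 0.
Definition ex_S : nat := 7.

From mathcomp Require Import all_boot.

(* With S = 7 of the 8 candidates, every committee leaves out exactly one
   candidate d.  If d is one of c_5, ..., c_8, the agent approving only d must be
   assigned to a committee member she does not approve, so the cost is
   positive; whereas dropping c_1 admits a cost-0 assignment (c_2, c_3, c_4 take
   two y1-agents each, c_5, ..., c_8 their own agent).  Hence MHA and MRA both
   select only committees that drop a member of y1. *)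

Set Implicit Arguments.
Unset Strict Implicit.
Unset Printing Implicit Defensive.

Section MonroeCost.
Variables (C : finType) (S : nat) (B : {set C} -> nat).

(* The agents holding ballot A can only be served by members of W outside A. *)
Lemma monroe_cost_gt0 (W A : {set C}) M :
  [disjoint W & A] -> 0 < B A -> monroe_assignment S B W M -> 0 < monroe_cost W M.
Proof.
move=> dWA BA [sumM _]; rewrite /monroe_cost (bigD1 A) //= (eq_bigl (mem W)).
  by rewrite sumM ltn_addr.
by move=> c /=; case: (boolP (c \in W)) => cW //=; rewrite (disjointFr dWA cW).
Qed.

Lemma MHA_MRA0 (W : {set C}) :
  (exists W0, MRA0 S B W0) -> MHA S B W -> MRA0 S B W.
Proof.
move=> [W0 [cW0 [M0 [hM0 cost0]]]] [cW [M [hM minM]]]; split=> //.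
by exists M; split=> //; apply/eqP; rewrite -leqn0 -cost0 minM.
Qed.

Lemma MRA_MRA0 (W : {set C}) :
  (exists W0, MRA0 S B W0) -> MRA S B W -> MRA0 S B W.
Proof. by move=> ex0 [|[]]. Qed.

End MonroeCost.

Lemma setC1_of_card (T : finType) (W : {set T}) :
  #|W|.+1 = #|T| -> exists d, W = ~: [set d].
Proof.
move=> cW; have /cards1P [d dW] : #|~: W| == 1.
  by rewrite cardsCs setCK -cW subSnn.
by exists d; rewrite -dW setCK.
Qed.

Lemma card_setC1I (T : finType) (A : {set T}) d :
  #|~: [set d] :&: A| = #|A| - (d \in A).
Proof. by rewrite setIC -setDE (cardsD1 d A) addKn. Qed.

Lemma val_cand k : k < 8 -> val (cand k) = k.
Proof. exact: inordK. Qed.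

Lemma in_y1 (d : 'I_8) : (d \in y1) = (val d < 4).
Proof. by rewrite !inE -!val_eqE /= !val_cand //; case: d => [[|[|[|[|m]]]] ?]. Qed.

Lemma card_y1 : #|y1| = 4.
Proof.
have cardsU1r (T : finType) (A : {set T}) a : #|A :|: [set a]| = (a \notin A) + #|A|.
  by rewrite setUC cardsU1.
by rewrite /y1 !cardsU1r cards1 !inE -!val_eqE /= !val_cand.
Qed.

Lemma set1_neq_y1 (d : 'I_8) : [set d] != y1.
Proof. by apply/eqP => e; have := card_y1; rewrite -e cards1. Qed.

Lemma ex_B_set1 (d : 'I_8) : ex_B [set d] = (d \notin y1).
Proof.
rewrite /ex_B (negbTE (set1_neq_y1 d)) !(inj_eq set1_inj) in_y1 -!val_eqE /= !val_cand //.
by case: d => [[|[|[|[|[|[|[|[|m]]]]]]]] ?].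
Qed.

Lemma ex_B_supp (A : {set 'I_8}) : ex_B A != 0 -> A = y1 \/ exists d, A = [set d].
Proof.
rewrite /ex_B; case: (A =P y1) => [->|_]; first by left.
by case: ifP => // /orP [/orP [/orP [] | ] | ] /eqP -> _; right; eexists.
Qed.

Lemma num_agents_ex_B : num_agents ex_B = 10.
Proof.
pose singles := [set [set d] | d in ~: y1].
rewrite /num_agents (bigD1 y1) //= (bigID (mem singles)) /= [X in _ + (_ + X)]big1; last first.
  move=> A /andP [nAy1 nAs]; apply/eqP; apply: contraNT nAs => nz.
  case: (ex_B_supp nz) => [Ay1|[d Ad]]; first by rewrite Ay1 eqxx in nAy1.
  by move: nz; rewrite Ad ex_B_set1 => dy; rewrite imset_f // inE; case: (d \in y1) dy.
rewrite addn0 (eq_bigl (mem singles)); last first.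
  by move=> A; apply: andb_idl => /imsetP [d _ ->]; exact: set1_neq_y1.
rewrite big_imset /=; last by move=> d1 d2 _ _; exact: set1_inj.
rewrite (eq_bigr (fun=> 1)); last by move=> d dy; rewrite ex_B_set1 -in_setC dy.
by rewrite sum1_card cardsCs setCK card_y1 card_ord /ex_B eqxx.
Qed.

Definition W0 : {set 'I_8} := ~: [set cand 0].
Definition M0 (A : {set 'I_8}) (c : 'I_8) : nat :=
  if A == y1 then (c \in y1) * 2 else (A == [set c]) * ex_B A.

Lemma M0_assignment : monroe_assignment ex_S ex_B W0 M0.
Proof.
split=> [A|c cW0].
  rewrite /M0; case: (A =P y1) => [->|nAy1].
    rewrite (eq_bigr (fun c => if c \in y1 then 2 else 0)) => [|c _]; last by case: (c \in y1).
    rewrite -big_mkcondr (eq_bigl (mem (W0 :&: y1))) => [|c]; last by rewrite !inE.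
    by rewrite sum_nat_const card_setC1I card_y1 in_y1 val_cand // /ex_B eqxx.
  have [->|nz] := eqVneq (ex_B A) 0; first by rewrite big1 // => c _; rewrite muln0.
  case: (ex_B_supp nz) => [//|[d Ad]]; subst A.
  have dW0 : d \in W0.
    by rewrite in_setC in_set1; apply: contraTneq nz => ->; rewrite ex_B_set1 in_y1 val_cand.
  rewrite (bigD1 d) //= eqxx mul1n big1 ?addn0 // => c /andP [_ ncd].
  by rewrite (inj_eq set1_inj) eq_sym (negbTE ncd).
rewrite num_agents_ex_B (bigD1 y1) //= (bigD1 [set c]) ?set1_neq_y1 //= big1.
  by rewrite /M0 eqxx (negbTE (set1_neq_y1 c)) eqxx ex_B_set1; case: (c \in y1).
by move=> A /andP [nAy1 nAc]; rewrite /M0 (negbTE nAy1) (negbTE nAc).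
Qed.

Lemma M0_cost : monroe_cost W0 M0 = 0.
Proof.
apply: big1 => A _; apply: big1 => c /andP [_ ncA]; rewrite /M0.
case: (A =P y1) => [Ay1|_]; first by rewrite -Ay1 (negbTE ncA).
by case: (A =P [set c]) => // Ac; rewrite Ac set11 in ncA.
Qed.

Lemma MRA0_W0 : MRA0 ex_S ex_B W0.
Proof.
split; first by rewrite cardsCs setCK cards1 card_ord.
by exists M0; split; [exact: M0_assignment | exact: M0_cost].
Qed.

Lemma MRA0_card_meet_y1 (W : {set 'I_8}) : MRA0 ex_S ex_B W -> #|W :&: y1| = 3.
Proof.
move=> [cW [M [hM cost0]]].
have [d Wd] : exists d, W = ~: [set d] by apply: setC1_of_card; rewrite cW card_ord.
subst W.
have dy1 : d \in y1.
  apply: contraT => ndy1; have := monroe_cost_gt0 (A := [set d]) _ _ hM.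
  by rewrite cost0 ex_B_set1 ndy1 disjoints_subset => /(_ (subxx _) isT).
by rewrite card_setC1I card_y1 dy1.
Qed.

Theorem theorem13 :
  num_agents ex_B = 10 /\
  (ex_B y1 * ex_S) %/ num_agents ex_B = 4 /\
  (ex_B y1 * ex_S) %/ num_agents ex_B <= #|y1| /\
  (forall W : {set 'I_8}, MHA ex_S ex_B W -> #|W :&: y1| = 3) /\
  (forall W : {set 'I_8}, MRA ex_S ex_B W -> #|W :&: y1| = 3).
Proof.
have zero_cost_exists : exists W, MRA0 ex_S ex_B W by exists W0; exact: MRA0_W0.
rewrite num_agents_ex_B card_y1 /ex_B eqxx; do 3!split=> //.
split=> W.
- by move/(MHA_MRA0 zero_cost_exists); exact: MRA0_card_meet_y1.
- by move/(MRA_MRA0 zero_cost_exists); exact: MRA0_card_meet_y1.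
Qed.
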